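(* Let $g:\mathbb{N}\to\mathbb{R}^+$ be non-increasing with $g(0)=1$, let $F$ be the decayed sum induced by $g$, and let $G(x)=\sum_{i=0}^{x-1}g(i)$. If there exists an $\varepsilon$-differentially private online algorithm that at time step $j$ outputs $\hat F(x_1,\ldots,x_j)$ and achieves $(\delta,\gamma)$-utility with respect to $F$, then $$\delta\ge\frac12\,G\!\left(\Omega\!\left(\frac{\log(1/\gamma)}{\varepsilon}\right)\right).$$
   Context: The decayed sum induced by $g$ is $F(x_1,\ldots,x_j)=\sum_{i=1}^j x_i\,g(j-i)$. Online model: at each time step $i$ a randomized online algorithm receives $x_i\in[0,1]$ and outputs a real number $\hat F(x_1,\ldots,x_i)$. It is $\varepsilon$-differentially private (under continual observation) if for all $T$, all measurable $S\subseteq\mathbb{R}^T$, all inputs $x_1,\ldots,x_T\in[0,1]$, all $j\le T$ and all $x_j'\in[0,1]$, $\Pr[(\hat F(x_1,\ldots,x_j,\ldots,x_k))_{k=1}^T\in S]\le e^{\varepsilon}\Pr[(\hat F(x_1,\ldots,x_j',\ldots,x_k))_{k=1}^T\in S]$ (second sequence computed on the input with $x_j$ replaced by $x_j'$). It achieves $(\delta,\gamma)$-utility with respect to $F$ if for all inputs and all $j$, $\Pr[|\hat F(x_1,\ldots,x_j)-F(x_1,\ldots,x_j)|>\delta]<\gamma$. *)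

From HB Require Import structures.
From mathcomp Require Import all_boot all_order all_algebra.
From mathcomp Require Import all_classical all_reals all_analysis.
Set Implicit Arguments. Unset Strict Implicit. Unset Printing Implicit Defensive.
Import Order.TTheory GRing.Theory Num.Theory.
Local Open Scope classical_set_scope.
Local Open Scope ring_scope.

Section DecayedSum.
Variable R : realType.

(* Decayed sum F(x_1..x_j) = sum_{i=1}^j x_i g(j-i); the sequence s is
   [x_1; ...; x_j] (0-indexed: s`_i = x_{i+1}). *)
Definition decayed_sum (g : nat -> R) (s : seq R) : R :=
  \sum_(i < size s) s`_i * g (size s - 1 - i)%N.

Definition Gsum (g : nat -> R) (x : nat) : R := \sum_(i < x) g i.

Definition in01 (s : seq R) : bool := all (fun a => (0 <= a <= 1)) s.

(* Borel sigma-algebra on R^T = ('I_T -> R): generated by measurable boxes. *)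
Definition box_sets (T : nat) : set (set ('I_T -> R)) :=
  [set S | exists B : 'I_T -> set R,
      (forall i, measurable (B i)) /\ S = [set f | forall i, B i (f i)]].

Definition borelRT (T : nat) (S : set ('I_T -> R)) : Prop := <<s @box_sets T >> S.

(* A randomized online algorithm: a probability space (Omega, P) of random
   coins and, for every prefix (x_1,...,x_i) of the input, the output
   hat F(x_1,...,x_i) as a function of the coins.  The output at time i only
   depends on the input received so far. *)

Variables (d : measure_display) (Omega : measurableType d).

Definition out_seq (A : seq R -> Omega -> R) (T : nat) (x : seq R)
  : Omega -> ('I_T -> R) := fun w i => A (take i.+1 x) w.

Arguments out_seq : clear implicits.
Definition online_alg_measurable (A : seq R -> Omega -> R) : Prop :=
  forall s, in01 s -> measurable_fun setT (A s).

Definition diff_private (P : probability Omega R) (A : seq R -> Omega -> R)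
    (eps : R) : Prop :=
  forall (T : nat) (S : set ('I_T -> R)) (x : seq R) (j : nat) (xj' : R),
    borelRT S -> size x = T -> in01 x -> (j < T)%N -> 0 <= xj' <= 1 ->
    (P (out_seq A T x @^-1` S)
      <= (expR eps)%:E * P (out_seq A T (set_nth 0%R x j xj') @^-1` S))%E.

Definition has_utility (P : probability Omega R) (A : seq R -> Omega -> R)
    (F : seq R -> R) (delta gamma : R) : Prop :=
  forall (x : seq R) (j : nat), in01 x -> (0 < j <= size x)%N ->
    (P [set w | (delta < `| A (take j x) w - F (take j x) |)%R] < gamma%:E)%E.

End DecayedSum.

From HB Require Import structures.
From mathcomp Require Import all_boot all_order all_algebra.
From mathcomp Require Import all_classical all_reals all_analysis.
From mathcomp Require Import Rstruct.
From mathcomp Require Import zify lra.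
Set Implicit Arguments. Unset Strict Implicit. Unset Printing Implicit Defensive.
Import Order.TTheory GRing.Theory Num.Theory.
Local Open Scope classical_set_scope.
Local Open Scope ring_scope.

(** Compare the all-zeros and the all-ones inputs of length k+1, whose decayed
   sums are 0 and G(k+1).  If 2 delta < G(k+1), the event "the last output lies
   in [-delta, delta]" has probability > 1 - gamma on the zeros but < gamma on
   the ones.  Turning the zeros into ones one coordinate at a time, privacy
   loses a factor e^eps per step, so 1 - gamma < e^((k+1) eps) gamma.  With
   c = 1/2 and (k+1) eps <= ln(1/gamma)/2 the right-hand side is at most
   sqrt gamma <= 1/2, which contradicts gamma <= 1/4. *)

Section DecayedSumLowerBound.
Variable R : realType.

Lemma decayed_sum_nseq0 (g : nat -> R) k : decayed_sum g (nseq k 0) = 0.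
Proof. by rewrite /decayed_sum big1 // => i _; rewrite nth_nseq if_same mul0r. Qed.

Lemma decayed_sum_nseq1 (g : nat -> R) k : decayed_sum g (nseq k 1) = Gsum g k.
Proof.
rewrite /decayed_sum /Gsum size_nseq (reindex_inj rev_ord_inj) /=.
apply: eq_bigr => -[i lt_ik] _ /=; rewrite nth_nseq ifT ?mul1r; last lia.
congr g; lia.
Qed.

Lemma in01_nseq k (a : R) : 0 <= a <= 1 -> in01 (nseq k a).
Proof. by move=> a01; apply/allP => x /nseqP[->]. Qed.

Definition hybrid (k m : nat) : seq R := nseq m 1 ++ nseq (k - m) 0.

Lemma size_hybrid k m : (m <= k)%N -> size (hybrid k m) = k.
Proof. by move=> le_mk; rewrite size_cat !size_nseq subnKC. Qed.

Lemma in01_hybrid k m : in01 (hybrid k m).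
Proof.
by rewrite /in01 all_cat; apply/andP; split; apply: in01_nseq; rewrite ?lexx ?ler01.
Qed.

Lemma set_nth_hybrid k m : (m < k)%N -> set_nth 0 (hybrid k m) m 1 = hybrid k m.+1.
Proof.
rewrite /hybrid; elim: m k => [|m IH] [|k] //= lt_mk.
  by rewrite subSS subn0.
by rewrite subSS IH // subSS.
Qed.

Lemma hybrid0 k : hybrid k 0 = nseq k 0.
Proof. by rewrite /hybrid subn0. Qed.

Lemma hybridnn k : hybrid k k = nseq k 1.
Proof. by rewrite /hybrid subnn cats0. Qed.

Lemma borelRT_last n (B : set R) :
  measurable B -> borelRT [set f : 'I_n.+1 -> R | B (f ord_max)].
Proof.
move=> mB; apply: sub_sigma_algebra.
exists (fun i => if i == ord_max then B else setT); split.
  by move=> i; case: ifP.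
apply/seteqP; split=> f /= Bf; last by have := Bf ord_max; rewrite eqxx.
by move=> i; case: eqP => // ->.
Qed.

Lemma amplified_prob_ge (gamma E : R) (p0 p1 : \bar R) :
  0 < gamma <= 4^-1 -> 0 <= E -> E ^+ 2 * gamma <= 1 -> (0 <= p1)%E ->
  (1 - p0 < gamma%:E)%E -> (p0 <= E%:E * p1)%E -> (gamma%:E <= p1)%E.
Proof.
move=> /andP[gamma_gt0 gamma_le] E_ge0 E_bd.
case: p0 p1 => [r0||] [r1||] //= r1_ge0; rewrite ?leey //.
rewrite -EFinD -EFinM !lte_fin !lee_fin => r0_gt r0_le.
rewrite leNgt; apply/negP => r1_lt.
nra.
Qed.

Lemma expR_group_sq_mul_le1 (eps gamma : R) n :
  0 < eps -> 0 < gamma -> n%:R <= 2^-1 * ln gamma^-1 / eps ->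
  (expR eps ^+ n) ^+ 2 * gamma <= 1.
Proof.
move=> eps_gt0 gamma_gt0; rewrite ler_pdivlMr // => n_le.
rewrite -!expRM_natl -ler_pdivlMr // div1r.
rewrite -[X in _ <= X]lnK ?posrE ?invr_gt0 // ler_expR; lra.
Qed.

Variables (d : measure_display) (Omega : measurableType d).
Variables (P : probability Omega R) (A : seq R -> Omega -> R).

Lemma out_seq_last_preimage n x (B : set R) : size x = n.+1 ->
  out_seq A (T:=n.+1) x @^-1` [set f | B (f ord_max)] = A x @^-1` B.
Proof.
move=> size_x; apply/seteqP; split=> w.
all: by rewrite /= /out_seq /= take_oversize ?size_x.
Qed.

Lemma diff_private_hybrid eps k (S : set ('I_k -> R)) :
  diff_private P A eps -> borelRT S -> forall m, (m <= k)%N ->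
  (P (out_seq A (T:=k) (hybrid k 0) @^-1` S) <=
     ((expR eps) ^+ m)%:E * P (out_seq A (T:=k) (hybrid k m) @^-1` S))%E.
Proof.
move=> dpA mS; elim=> [|m IH] lt_mk; first by rewrite expr0 mul1e.
apply: (le_trans (IH (ltnW lt_mk))).
have := dpA k S (hybrid k m) m 1 mS (size_hybrid (ltnW lt_mk)) (in01_hybrid k m).
rewrite set_nth_hybrid // lexx ler01 => /(_ lt_mk isT) step.
rewrite exprSr EFinM -muleA; apply: lee_wpmul2l step.
by rewrite lee_fin exprn_ge0 // expR_ge0.
Qed.

Lemma diff_private_nseq eps k (B : set R) :
  diff_private P A eps -> measurable B ->
  (P (A (nseq k.+1 0%R) @^-1` B) <=
     (expR eps ^+ k.+1)%:E * P (A (nseq k.+1 1%R) @^-1` B))%E.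
Proof.
move=> dpA mB.
have := diff_private_hybrid dpA (borelRT_last mB) (leqnn k.+1).
by rewrite hybrid0 hybridnn !out_seq_last_preimage ?size_nseq.
Qed.

Lemma measurable_alg_preimage s (B : set R) :
  online_alg_measurable A -> in01 s -> measurable B -> measurable (A s @^-1` B).
Proof. by move=> mA s01 mB; rewrite -[X in measurable X]setTI; apply: mA. Qed.

Lemma error_gt_setE (F : seq R -> R) delta x :
  [set w | delta < `|A x w - F x|] =
  ~` (A x @^-1` [set` `[F x - delta, F x + delta]]).
Proof.
by apply/seteqP; split=> w /=; rewrite in_itv /= -ler_distl ltNge => /negP.
Qed.

Section Utility.
Variables (F : seq R -> R) (delta gamma : R).
Hypotheses (mA : online_alg_measurable A) (utA : has_utility P A F delta gamma).

Lemma has_utility_final x : in01 x -> (0 < size x)%N ->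
  (P [set w | (delta < `|A x w - F x|)%R] < gamma%:E)%E.
Proof.
move=> x01 x_gt0; have := @utA x (size x) x01.
by rewrite take_size x_gt0 leqnn; apply.
Qed.

Lemma has_utility_within x : in01 x -> (0 < size x)%N ->
  (1 - P (A x @^-1` [set` (`[F x - delta, F x + delta])%R]) < gamma%:E)%E.
Proof.
move=> x01 x_gt0; rewrite -probability_setC -?error_gt_setE ?has_utility_final //.
exact: measurable_alg_preimage.
Qed.

Lemma has_utility_far x (B : set R) : in01 x -> (0 < size x)%N -> measurable B ->
  (forall y, B y -> delta < `|y - F x|) -> (P (A x @^-1` B) < gamma%:E)%E.
Proof.
move=> x01 x_gt0 mB far_B; apply: le_lt_trans (has_utility_final x01 x_gt0).
apply: le_measure; rewrite ?inE; first exact: measurable_alg_preimage.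
  by rewrite error_gt_setE; apply/measurableC/measurable_alg_preimage.
by move=> w /far_B.
Qed.

End Utility.

Lemma has_utility_ge0 F delta gamma :
  has_utility P A F delta gamma -> gamma <= 1 -> 0 <= delta.
Proof.
move=> utA gamma_le1; rewrite leNgt; apply/negP => delta_lt0.
have := utA [:: 0] 1%N; rewrite /in01 /= lexx ler01 => /(_ isT isT).
have -> : [set w | delta < `|A [:: 0] w - F [:: 0]|] = setT.
  by apply/seteqP; split=> // w _; apply: lt_le_trans delta_lt0 _.
by rewrite probability_setT lte_fin ltNge gamma_le1.
Qed.

Lemma Gsum_le_twice_delta (g : nat -> R) eps delta gamma k :
  online_alg_measurable A -> diff_private P A eps ->
  has_utility P A (decayed_sum g) delta gamma ->
  0 < gamma <= 4^-1 -> (expR eps ^+ k.+1) ^+ 2 * gamma <= 1 ->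
  Gsum g k.+1 <= 2 * delta.
Proof.
move=> mA dpA utA gamma_bd E_bd; rewrite leNgt; apply/negP => small_delta.
pose I : set R := [set` `[- delta, delta]].
have mI : measurable I := measurable_itv _.
have zeros01 : in01 (nseq k.+1 (0 : R)) by apply: in01_nseq; rewrite lexx ler01.
have ones01 : in01 (nseq k.+1 (1 : R)) by apply: in01_nseq; rewrite lexx ler01.
have zeros_in : (1 - P (A (nseq k.+1 0%R) @^-1` I) < gamma%:E)%E.
  have := has_utility_within mA utA zeros01; rewrite size_nseq decayed_sum_nseq0.
  by rewrite sub0r add0r; apply.
have ones_out : (P (A (nseq k.+1 1%R) @^-1` I) < gamma%:E)%E.
  apply: (has_utility_far mA utA ones01 _ mI) => [|y]; first by rewrite size_nseq.
  rewrite decayed_sum_nseq1 /I /= in_itv /= -ler_norml => y_small.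
  rewrite distrC; apply: lt_le_trans (ler_norm _); have := ler_norm y; lra.
have E_ge0 : 0 <= expR eps ^+ k.+1 by rewrite exprn_ge0 ?expR_ge0.
have := amplified_prob_ge gamma_bd E_ge0 E_bd (measure_ge0 _ _) zeros_in
  (diff_private_nseq k dpA mI).
by rewrite leNgt ones_out.
Qed.

End DecayedSumLowerBound.

Theorem theorem7 :
  exists (c gamma0 : Rdefinitions.R), 0 < c /\ 0 < gamma0 /\
  forall (g : nat -> Rdefinitions.R) (eps delta gamma : Rdefinitions.R)
    (d : measure_display) (Omega : measurableType d)
    (P : probability Omega Rdefinitions.R)
    (A : seq Rdefinitions.R -> Omega -> Rdefinitions.R),
    (forall i, 0 < g i) -> (forall i, g i.+1 <= g i) -> g 0%N = 1 ->
    0 < eps -> 0 < gamma -> gamma <= gamma0 ->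
    online_alg_measurable A ->
    diff_private P A eps ->
    has_utility P A (decayed_sum g) delta gamma ->
    delta >= 2^-1 * Gsum g (Num.truncn (c * ln (gamma^-1) / eps)).
Proof.
exists 2^-1, 4^-1; do 2![split; first by rewrite invr_gt0].
move=> g eps delta gamma d Omega P A _ _ _ eps_gt0 gamma_gt0 gamma_le mA dpA utA.
have ln_ge0 : 0 <= ln gamma^-1 by rewrite ln_ge0 // invf_ge1 //; lra.
case k_def: (Num.truncn _) => [|k].
  by rewrite /Gsum big_ord0 mulr0; apply: has_utility_ge0 utA _; lra.
have k_le : k.+1%:R <= 2^-1 * ln gamma^-1 / eps.
  by rewrite -k_def truncn_le divr_ge0 ?mulr_ge0 //; lra.
have E_bd := expR_group_sq_mul_le1 eps_gt0 gamma_gt0 k_le.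
have := Gsum_le_twice_delta mA dpA utA _ E_bd.
by rewrite gamma_gt0 gamma_le => /(_ isT); lra.
Qed.
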